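(* Let $\Sigma$ be a set and let $A\in\mathrm{Abs}(\wp(\Sigma))$ be given by the Galois insertion $(\alpha,\wp(\Sigma),A,\gamma)$. The following are equivalent: (1) $A$ is partitioning; (2) $\gamma$ is additive and $\{\gamma(\alpha(\{s\}))\}_{s\in\Sigma}$ is a partition of $\Sigma$ (and in this case $\mathrm{par}(A)=\{\gamma(\alpha(\{s\}))\}_{s\in\Sigma}$); (3) $A$ is forward complete for the complement operator $\complement:\wp(\Sigma)\to\wp(\Sigma)$, $\complement(S)=\Sigma\setminus S$.
   Context: An abstract domain of $\wp(\Sigma)_\subseteq$ is a complete lattice $A$ with a Galois insertion $(\alpha,\wp(\Sigma),A,\gamma)$: monotone maps with $\alpha(S)\le_A a\iff S\subseteq\gamma(a)$ and $\alpha\circ\gamma=\mathrm{id}$; its closure is $\mu_A=\gamma\circ\alpha$, and domains are identified when their closures coincide ($\mathrm{Abs}(\wp(\Sigma))$). $\gamma$ is additive if it preserves arbitrary joins (unions). For a partition $P$ of $\Sigma$, $\mathrm{pad}(P)$ is the abstract domain whose closure is $S\mapsto\bigcup\{B\in P\mid B\cap S\ne\varnothing\}$; $A$ is partitioning if $\mu_A=\mathrm{pad}(P)$'s closure for some partition $P$. $\mathrm{par}(A)$ is the partition of $\Sigma$ into the classes of $s\equiv_A s'\iff\alpha(\{s\})=\alpha(\{s'\})$. $A$ is forward complete for a unary $f$ if $f\circ\mu_A=\mu_A\circ f\circ\mu_A$. *)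

From mathcomp Require Import all_boot.
From mathcomp Require Import boolp classical_sets.
Set Implicit Arguments. Unset Strict Implicit. Unset Printing Implicit Defensive.
Local Open Scope classical_set_scope.

Definition is_lub (A : Type) (le : A -> A -> Prop) (X : set A) (a : A) : Prop :=
  (forall x, X x -> le x a) /\ (forall b, (forall x, X x -> le x b) -> le a b).

Record galois_insertion (Sigma A : Type) := GaloisInsertion {
  le : A -> A -> Prop;
  le_refl : forall a, le a a;
  le_antisym : forall a b, le a b -> le b a -> a = b;
  le_trans : forall a b c, le a b -> le b c -> le a c;
  le_complete : forall X : set A, exists a, is_lub le X a;
  alpha : set Sigma -> A;
  gamma : A -> set Sigma;
  alpha_mono : forall S T, S `<=` T -> le (alpha S) (alpha T);
  gamma_mono : forall a b, le a b -> gamma a `<=` gamma b;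
  galois : forall S a, le (alpha S) a <-> S `<=` gamma a;
  insertion : forall a, alpha (gamma a) = a
}.

Section Defs.
Context (Sigma A : Type) (G : galois_insertion Sigma A).

Definition mu (S : set Sigma) : set Sigma := gamma G (alpha G S).

Definition gamma_additive : Prop :=
  forall (X : set A) (a : A), is_lub (le G) X a ->
    gamma G a = \bigcup_(x in X) gamma G x.

Definition forward_complete (f : set Sigma -> set Sigma) : Prop :=
  forall S, f (mu S) = mu (f (mu S)).

Definition par : set (set Sigma) :=
  [set C | exists s, C = [set s' | alpha G [set s'] = alpha G [set s]]].
End Defs.

Definition is_partition (Sigma : Type) (P : set (set Sigma)) : Prop :=
  (forall B, P B -> B !=set0) /\
  (forall B C, P B -> P C -> B `&` C !=set0 -> B = C) /\
  \bigcup_(B in P) B = setT.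

(* closure of pad(P): S |-> U { B in P | B meets S } *)
Definition pad_closure (Sigma : Type) (P : set (set Sigma)) (S : set Sigma)
  : set Sigma :=
  \bigcup_(B in [set B | P B /\ B `&` S !=set0]) B.

Definition partitioning (Sigma A : Type) (G : galois_insertion Sigma A) : Prop :=
  exists P : set (set Sigma), is_partition P /\
    forall S, mu G S = pad_closure P S.

(* The closure mu = gamma o alpha of a partitioning domain sends a point to
   its block, so it is determined by the closures of singletons (additivity)
   and the relation "u lies in mu {s}" is symmetric.  Conversely these two
   properties make the sets mu {s} the blocks of a partition whose padding is
   mu.  Additivity of mu is additivity of gamma, and symmetry says exactly
   that the sets mu {s} are pairwise disjoint or equal.  Finally, when mu is
   additive and symmetric, the complement of a closed set is a union of
   blocks, hence closed; conversely, if complements of closed sets are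
   closed, then x in mu S forces mu {x} to meet S (otherwise S lies in the
   closed set ~ mu {x}), which yields both symmetry and additivity. *)
From mathcomp Require Import all_boot.
From mathcomp Require Import boolp classical_sets.
Local Open Scope classical_set_scope.

Section PadClosure.
Variables (Sigma : Type) (P : set (set Sigma)).

Lemma pad_closure_bigcup S :
  pad_closure P S = \bigcup_(s in S) pad_closure P [set s].
Proof.
apply/seteqP; split => x.
- move=> [B [PB [s [Bs Ss]]] Bx]; exists s => //.
  by exists B => //; split=> //; exists s.
- move=> [s Ss [B [PB [t [Bt ts]]] Bx]].
  by exists B => //; split=> //; exists s; split=> //; rewrite -ts.
Qed.

Lemma pad_closure_sym s u :
  pad_closure P [set s] u -> pad_closure P [set u] s.
Proof.
move=> [B [PB [t [Bt ts]]] Bu].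
by exists B; [split=> //; exists u | rewrite -ts].
Qed.

End PadClosure.

Section Closure.
Context {Sigma A : Type} (G : galois_insertion Sigma A).

Lemma mu_ext S : S `<=` mu G S.
Proof. by apply/galois; apply: le_refl. Qed.

Lemma mu_mono S T : S `<=` T -> mu G S `<=` mu G T.
Proof. by move=> ST; apply/gamma_mono/alpha_mono. Qed.

Lemma mu_idem S : mu G (mu G S) = mu G S.
Proof. by rewrite /mu insertion. Qed.

Lemma mu_sub_closed S F : S `<=` F -> mu G F = F -> mu G S `<=` F.
Proof. by move=> SF <-; apply: mu_mono. Qed.

Lemma mu1_sub {s S} : S s -> mu G [set s] `<=` mu G S.
Proof. by move=> Ss; apply: mu_mono => _ ->. Qed.

Lemma gamma_inj : injective (gamma G).
Proof. exact: can_inj (@insertion _ _ G). Qed.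

Definition blocks : set (set Sigma) := range (fun s => mu G [set s]).

Definition mu_additive : Prop :=
  forall S, mu G S = \bigcup_(s in S) mu G [set s].

Definition mu_symmetric : Prop :=
  forall s u, mu G [set s] u -> mu G [set u] s.

Lemma gamma_additiveP : gamma_additive G <-> mu_additive.
Proof.
split=> [gadd S | madd X a [aub alub]].
  have lub_alpha1 : is_lub (le G) [set alpha G [set s] | s in S] (alpha G S).
    split=> [_ [s Ss <-] | b bub]; first by apply: alpha_mono => _ ->.
    apply/galois => s Ss.
    have /galois : le G (alpha G [set s]) b by apply: bub; exists s.
    exact.
  rewrite /mu (gadd _ _ lub_alpha1); apply/seteqP; split=> x.
  - by move=> [_ [s Ss <-] ?]; exists s.
  - by move=> [s Ss ?]; exists (alpha G [set s]) => //; exists s.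
pose V := \bigcup_(x in X) gamma G x.
have closedV : mu G V = V.
  apply/seteqP; split; last exact: mu_ext.
  rewrite madd => y [z [x Xx gxz] yz]; exists x => //.
  by have := mu1_sub gxz; rewrite /mu insertion; apply.
suff -> : a = alpha G V by exact: closedV.
apply: le_antisym; first apply: alub => x Xx.
  by rewrite -(insertion G x); apply: alpha_mono => y; exists x.
by apply/galois => y [x Xx]; apply/gamma_mono/aub.
Qed.

Section Symmetric.
Hypothesis mu_sym : mu_symmetric.

Lemma mu1_eq {s u} : mu G [set s] u -> mu G [set s] = mu G [set u].
Proof.
move=> su; apply/seteqP; split; apply: mu_sub_closed (mu_idem _) => _ ->.
- exact: mu_sym.
- exact: su.
Qed.

Lemma par_blocks : par G = blocks.
Proof.
have classE s : [set s' | alpha G [set s'] = alpha G [set s]] = mu G [set s].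
  apply/seteqP; split=> s' /=.
  - by move=> e; rewrite /mu -e; apply: mu_ext.
  - by move=> /mu1_eq /gamma_inj.
apply/seteqP; split=> C [s].
- by move=> ->; exists s => //; rewrite classE.
- by move=> _ <-; exists s; rewrite classE.
Qed.

Hypothesis mu_add : mu_additive.

Lemma mu_pad_closure S : mu G S = pad_closure blocks S.
Proof.
apply/seteqP; split=> x.
- rewrite mu_add => -[s Ss sx]; exists (mu G [set s]) => //.
  by split; [exists s | exists s; split => //; apply: mu_ext].
- move=> [_ [[t _ <-] [s [ts Ss]]]]; rewrite (mu1_eq ts).
  exact: mu1_sub.
Qed.

End Symmetric.

Lemma blocks_partitionP : is_partition blocks <-> mu_symmetric.
Proof.
split=> [[_ [disj _]] s u su | mu_sym].
  have -> : mu G [set u] = mu G [set s].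
    by apply: disj; [exists u | exists s | exists u; split => //; apply: mu_ext].
  exact: mu_ext.
split; [|split].
- by move=> _ [s _ <-]; exists s; apply: mu_ext.
- move=> _ _ [s _ <-] [t _ <-] [u [su tu]].
  by rewrite (mu1_eq mu_sym su) (mu1_eq mu_sym tu).
- apply/seteqP; split=> // x _; exists (mu G [set x]); first by exists x.
  exact: mu_ext.
Qed.

Lemma partitioningP : partitioning G <-> mu_additive /\ mu_symmetric.
Proof.
split=> [[P [_ muE]] | [mu_add mu_sym]].
  split=> [S | s u]; rewrite !muE; last exact: pad_closure_sym.
  by rewrite pad_closure_bigcup; apply: eq_bigcupr => s _; rewrite muE.
exists blocks; split; first exact/blocks_partitionP.
exact: mu_pad_closure.
Qed.

Section ComplementComplete.
Hypothesis compl_complete : forward_complete G (fun S => ~` S).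

Lemma mu1_meets {S x} : mu G S x -> mu G [set x] `&` S !=set0.
Proof.
move=> Sx; apply: contrapT => /nonemptyPn; rewrite setIC => /disjoints_subset.
have closedC : mu G (~` mu G [set x]) = ~` mu G [set x] by rewrite -compl_complete.
move=> /mu_sub_closed/(_ closedC)/(_ x Sx); apply; exact: mu_ext.
Qed.

End ComplementComplete.

Lemma complement_completeP :
  forward_complete G (fun S => ~` S) <-> mu_additive /\ mu_symmetric.
Proof.
split=> [fc | [mu_add mu_sym] S].
  have mu_sym : mu_symmetric.
    by move=> s u /(mu1_meets fc) [y [uy ys]]; rewrite -ys.
  split=> // S; apply/seteqP; split=> x; last by move=> [s /mu1_sub]; apply.
  by move=> /(mu1_meets fc) [s [/mu_sym ? ?]]; exists s.
apply/seteqP; split; first exact: mu_ext.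
rewrite [in X in X `<=` _]mu_add => x [s not_Ss sx] Sx.
apply: not_Ss; have [t St tx] : (\bigcup_(t in S) mu G [set t]) x by rewrite -mu_add.
by apply: (mu1_sub St); rewrite (mu1_eq mu_sym tx); apply: mu_sym.
Qed.

End Closure.

Theorem corollary3p2 (Sigma A : Type) (G : galois_insertion Sigma A) :
  let cond2 := gamma_additive G /\
               is_partition (range (fun s : Sigma => gamma G (alpha G [set s]))) in
  (partitioning G <-> cond2) /\
  (partitioning G <-> forward_complete G (fun S => ~` S)) /\
  (cond2 -> par G = range (fun s : Sigma => gamma G (alpha G [set s]))).
Proof.
move=> cond2.
have cond2P : cond2 <-> mu_additive G /\ mu_symmetric G.
  by rewrite -gamma_additiveP -blocks_partitionP.
split; first by rewrite partitioningP cond2P.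
split; first by rewrite partitioningP complement_completeP.
by move=> /cond2P [_ /par_blocks].
Qed.
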